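(* For every QPTL formula $\varphi$ and every hyperassignment $\mathcal X\in\mathrm{HAsg}_\supseteq(\mathrm{free}(\varphi))$: (1) $\mathcal X\models^{\exists\forall}\varphi$ iff there exists $X\in\mathcal X$ such that $\chi\models\varphi$ for all $\chi\in X$; (2) $\mathcal X\models^{\forall\exists}\varphi$ iff for every $X\in\mathcal X$ there is $\chi\in X$ with $\chi\models\varphi$, where on the right-hand sides $\models$ is the Tarski semantics.
   Context: Let $AP$ be a set of atomic propositions and $\mathbb B=\{\top,\bot\}$. A temporal valuation is a function $f:\mathbb N\to\mathbb B$. An assignment is a partial function $\chi:AP\rightharpoonup(\mathbb N\to\mathbb B)$; $\mathrm{Asg}$ is the set of all assignments, $\mathrm{Asg}(P)$ the set of assignments with domain exactly $P\subseteq AP$, and $\mathrm{Asg}_\supseteq(P)$ the set of assignments whose domain contains $P$. For an assignment $\chi$, $p\in AP$ and a temporal valuation $f$, $\chi[p\mapsto f]$ is the assignment that agrees with $\chi$ except that it maps $p$ to $f$. Tarski semantics of QPTL (formulas $\varphi::=\psi\mid\neg\varphi\mid\varphi\wedge\varphi\mid\varphi\vee\varphi\mid\exists p.\varphi\mid\forall p.\varphi$, $\psi$ LTL), for $\chi\in\mathrm{Asg}_\supseteq(\mathrm{free}(\varphi))$: $\chi\models\psi$ iff $\chi\models_{LTL}\psi$ (see below); Boolean connectives as usual; $\chi\models\exists p.\phi$ iff $\chi[p\mapsto f]\models\phi$ for some temporal valuation $f$; $\chi\models\forall p.\phi$ iff for all $f$. A hyperassignment is a set $\mathcal X$ with $\emptyset\neq\mathcal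 X\subseteq 2^{\mathrm{Asg}(P)}$ and $\emptyset\notin\mathcal X$, for some $P\subseteq AP$; this $P$ is denoted $\mathrm{ap}(\mathcal X)$. $\mathrm{HAsg}$ is the set of all hyperassignments, $\mathrm{HAsg}(P)$ those with $\mathrm{ap}(\mathcal X)=P$, and $\mathrm{HAsg}_\supseteq(P)$ those with $\mathrm{ap}(\mathcal X)\supseteq P$. A choice function for $\mathcal X$ is a map $c:\mathcal X\to\mathrm{Asg}$ with $c(X)\in X$ for all $X\in\mathcal X$. The dual of $\mathcal X$ is $\overline{\mathcal X}=\{\mathrm{img}(c): c\text{ a choice function for }\mathcal X\}$. $\mathrm{par}(\mathcal X)$ is the set of pairs $(\mathcal X_1,\mathcal X_2)$ of (possibly empty) subsets of $\mathcal X$ with $\mathcal X_1\cap\mathcal X_2=\emptyset$ and $\mathcal X_1\cup\mathcal X_2=\mathcal X$. A functor over $P\subseteq AP$ is a function $F:\mathrm{Asg}(P)\to(\mathbb N\to\mathbb B)$; $\mathrm{Fnc}(P)$ is the set of all functors over $P$. For $\chi\in\mathrm{Asg}(P)$, $F\in\mathrm{Fnc}(P)$ and $p\in AP$, $\mathrm{ext}(\chi,F,p)=\chi[p\mapsto F(\chi)]$; for $X\subseteq\mathrm{Asg}(P)$, $\mathrm{ext}(X,F,p)=\{\mathrm{ext}(\chi,F,p):\chi\in X\}$; for a hyperassignment $\mathcal X$, $\mathrm{ext}(\mathcal X,p)=\{\mathrm{ext}(X,F,p):X\in\mathcal X,\ F\in\mathrm{Fnc}(\mathrm{ap}(\mathcal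 X))\}$. $\chi\models_{LTL}\psi$ iff the infinite word whose $t$-th letter is the valuation $q\mapsto\chi(q)(t)$ satisfies the LTL formula $\psi$ in the standard sense. Alternation flags are $\exists\forall$ and $\forall\exists$; $\bar\alpha$ denotes the flag different from $\alpha$. Alternating Hodges semantics of QPTL: for a QPTL formula $\varphi$, $\mathcal X\in\mathrm{HAsg}_\supseteq(\mathrm{free}(\varphi))$ and flag $\alpha$, $\mathcal X\models^\alpha\varphi$ is defined inductively: (1) for LTL $\psi$: $\mathcal X\models^{\exists\forall}\psi$ iff there is $X\in\mathcal X$ with $\chi\models_{LTL}\psi$ for all $\chi\in X$; $\mathcal X\models^{\forall\exists}\psi$ iff for every $X\in\mathcal X$ there is $\chi\in X$ with $\chi\models_{LTL}\psi$; (2) $\mathcal X\models^\alpha\neg\phi$ iff not $\mathcal X\models^{\bar\alpha}\phi$; (3) $\mathcal X\models^{\exists\forall}\phi_1\wedge\phi_2$ iff for every $(\mathcal X_1,\mathcal X_2)\in\mathrm{par}(\mathcal X)$, either ($\mathcal X_1\ne\emptyset$ and $\mathcal X_1\models^{\exists\forall}\phi_1$) or ($\mathcal X_2\ne\emptyset$ and $\mathcal X_2\models^{\exists\forall}\phi_2$); $\mathcal X\models^{\forall\exists}\phi_1\wedge\phi_2$ iff $\overline{\mathcal X}\models^{\exists\forall}\phi_1\wedge\phi_2$; (4) $\mathcal X\models^{\forall\exists}\phi_1\vee\phi_2$ iff there is $(\mathcal X_1,\mathcal X_2)\in\mathrm{par}(\mathcal X)$ such that ($\mathcal X_1\neq\emptyset$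 implies $\mathcal X_1\models^{\forall\exists}\phi_1$) and ($\mathcal X_2\neq\emptyset$ implies $\mathcal X_2\models^{\forall\exists}\phi_2$); $\mathcal X\models^{\exists\forall}\phi_1\vee\phi_2$ iff $\overline{\mathcal X}\models^{\forall\exists}\phi_1\vee\phi_2$; (5) $\mathcal X\models^{\exists\forall}\exists p.\phi$ iff $\mathrm{ext}(\mathcal X,p)\models^{\exists\forall}\phi$; $\mathcal X\models^{\forall\exists}\exists p.\phi$ iff $\overline{\mathcal X}\models^{\exists\forall}\exists p.\phi$; (6) $\mathcal X\models^{\forall\exists}\forall p.\phi$ iff $\mathrm{ext}(\mathcal X,p)\models^{\forall\exists}\phi$; $\mathcal X\models^{\exists\forall}\forall p.\phi$ iff $\overline{\mathcal X}\models^{\forall\exists}\forall p.\phi$. *)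

From Stdlib Require Import ClassicalEpsilon.
Set Implicit Arguments.

Section QPTL.
Variable AP : Type.

Definition tval := nat -> bool.
Definition asg := AP -> option tval.

Definition upd (chi : asg) (p : AP) (f : tval) : asg :=
  fun q => if excluded_middle_informative (q = p) then Some f else chi q.

Inductive ltl : Type :=
| LTrue
| LAtom (p : AP)
| LNot (a : ltl)
| LAnd (a b : ltl)
| LOr (a b : ltl)
| LNext (a : ltl)
| LUntil (a b : ltl).

Fixpoint ltl_sat (w : nat -> AP -> bool) (i : nat) (psi : ltl) : Prop :=
  match psi with
  | LTrue => True
  | LAtom p => w i p = true
  | LNot a => ~ ltl_sat w i a
  | LAnd a b => ltl_sat w i a /\ ltl_sat w i b
  | LOr a b => ltl_sat w i a \/ ltl_sat w i b
  | LNext a => ltl_sat w (S i) a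
  | LUntil a b => exists k, i <= k /\ ltl_sat w k b /\
                    forall j, i <= j -> j < k -> ltl_sat w j a
  end.

Fixpoint ltl_free (psi : ltl) : AP -> Prop :=
  match psi with
  | LTrue => fun _ => False
  | LAtom p => fun q => q = p
  | LNot a | LNext a => ltl_free a
  | LAnd a b | LOr a b | LUntil a b => fun q => ltl_free a q \/ ltl_free b q
  end.

(* the word whose t-th letter is q |-> chi(q)(t)
   (propositions outside dom chi read as false; irrelevant on Asg_sup(free)) *)
Definition word_of (chi : asg) : nat -> AP -> bool :=
  fun t q => match chi q with Some f => f t | None => false end.

Definition ltl_models (chi : asg) (psi : ltl) : Prop := ltl_sat (word_of chi) 0 psi.

Inductive qptl : Type :=
| QLtl (psi : ltl)
| QNot (a : qptl)
| QAnd (a b : qptl)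
| QOr (a b : qptl)
| QEx (p : AP) (a : qptl)
| QAll (p : AP) (a : qptl).

Fixpoint free (phi : qptl) : AP -> Prop :=
  match phi with
  | QLtl psi => ltl_free psi
  | QNot a => free a
  | QAnd a b | QOr a b => fun q => free a q \/ free b q
  | QEx p a | QAll p a => fun q => free a q /\ q <> p
  end.

Fixpoint tarski (chi : asg) (phi : qptl) : Prop :=
  match phi with
  | QLtl psi => ltl_models chi psi
  | QNot a => ~ tarski chi a
  | QAnd a b => tarski chi a /\ tarski chi b
  | QOr a b => tarski chi a \/ tarski chi b
  | QEx p a => exists f : tval, tarski (upd chi p f) a
  | QAll p a => forall f : tval, tarski (upd chi p f) a
  end.

Definition aset := asg -> Prop.
Definition hset := aset -> Prop.

Definition dom_exactly (P : AP -> Prop) (chi : asg) : Prop :=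
  forall q, P q <-> chi q <> None.

Definition is_hasg (P : AP -> Prop) (HX : hset) : Prop :=
  (exists X, HX X) /\
  (forall X, HX X -> exists chi, X chi) /\
  (forall X chi, HX X -> X chi -> dom_exactly P chi).

Definition in_HAsg_sup (Q : AP -> Prop) (HX : hset) : Prop :=
  exists P, is_hasg P HX /\ forall q, Q q -> P q.

Definition choice_fun (HX : hset) (c : aset -> asg) : Prop :=
  forall X, HX X -> X (c X).
Definition img (HX : hset) (c : aset -> asg) : aset :=
  fun chi => exists X, HX X /\ c X = chi.
Definition dual (HX : hset) : hset :=
  fun Y => exists c, choice_fun HX c /\ Y = img HX c.

Definition is_par (HX HX1 HX2 : hset) : Prop :=
  (forall Y, ~ (HX1 Y /\ HX2 Y)) /\ (forall Y, HX Y <-> HX1 Y \/ HX2 Y).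
Definition nonempty (HX : hset) : Prop := exists Y, HX Y.

(* functors and extension; a functor over ap(HX) is represented by a total
   function asg -> tval (only its values on Asg(ap(HX)) are ever used) *)
Definition functor := asg -> tval.
Definition ext_asg (chi : asg) (F : functor) (p : AP) : asg := upd chi p (F chi).
Definition ext_set (X : aset) (F : functor) (p : AP) : aset :=
  fun chi' => exists chi, X chi /\ chi' = ext_asg chi F p.
Definition ext_hset (HX : hset) (p : AP) : hset :=
  fun Y => exists X (F : functor), HX X /\ Y = ext_set X F p.

End QPTL.

Arguments LTrue {AP}.

Inductive flag : Type := EA | AE.
Definition flip (a : flag) : flag := match a with EA => AE | AE => EA end.

Fixpoint hodges {AP : Type} (phi : qptl AP) : flag -> hset AP -> Prop :=
  match phi with
  | QLtl psi => fun a HX =>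
      match a with
      | EA => exists X, HX X /\ forall chi, X chi -> ltl_models chi psi
      | AE => forall X, HX X -> exists chi, X chi /\ ltl_models chi psi
      end
  | QNot b => fun a HX => ~ hodges b (flip a) HX
  | QAnd b1 b2 =>
      let ea := fun HX : hset AP => forall HX1 HX2, is_par HX HX1 HX2 ->
                  (nonempty HX1 /\ hodges b1 EA HX1) \/
                  (nonempty HX2 /\ hodges b2 EA HX2) in
      fun a HX => match a with EA => ea HX | AE => ea (dual HX) end
  | QOr b1 b2 =>
      let ae := fun HX : hset AP => exists HX1 HX2, is_par HX HX1 HX2 /\
                  (nonempty HX1 -> hodges b1 AE HX1) /\
                  (nonempty HX2 -> hodges b2 AE HX2) in
      fun a HX => match a with AE => ae HX | EA => ae (dual HX) end
  | QEx p b =>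
      let ea := fun HX : hset AP => hodges b EA (ext_hset HX p) in
      fun a HX => match a with EA => ea HX | AE => ea (dual HX) end
  | QAll p b =>
      let ae := fun HX : hset AP => hodges b AE (ext_hset HX p) in
      fun a HX => match a with AE => ae HX | EA => ae (dual HX) end
  end.

From Stdlib Require Import Classical ClassicalEpsilon Setoid.
Set Implicit Arguments.

(* Write [EA_sat HX Q] for "some X in HX has all its assignments satisfying Q"
   and [AE_sat HX Q] for "every X in HX has an assignment satisfying Q".  Each clause of the Hodges
   semantics is matched by one set-theoretic fact about these two quantifier
   patterns, stated for arbitrary predicates Q:
   - negation swaps them (classical De Morgan);
   - passing to the dual family swaps them (choice functions);
   - the partition clauses compute conjunction under EA and disjunction
     under AE (split HX by whether a set already satisfies the first part);
   - extension by functors computes the quantifiers (choose witnesses by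
     epsilon, as functors may depend on the whole assignment).
   With these, a structural induction proves the correspondence for EVERY
   family of sets of assignments. *)

Section Quantifiers.
Variable AP : Type.

Definition EA_sat (HX : hset AP) (Q : asg AP -> Prop) : Prop :=
  exists X, HX X /\ forall chi, X chi -> Q chi.

Definition AE_sat (HX : hset AP) (Q : asg AP -> Prop) : Prop :=
  forall X, HX X -> exists chi, X chi /\ Q chi.

Definition flag_sat (a : flag) : hset AP -> (asg AP -> Prop) -> Prop :=
  match a with EA => EA_sat | AE => AE_sat end.

Definition asg_inh : inhabited (asg AP) := inhabits (fun _ => None).

Lemma not_AE_sat (HX : hset AP) (Q : asg AP -> Prop) :
  ~ AE_sat HX Q <-> EA_sat HX (fun chi => ~ Q chi).
Proof.
  unfold AE_sat, EA_sat. split.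
  - intros Hnot. apply NNPP; intros Hno. apply Hnot; intros X HXX.
    apply NNPP; intros Hnone. apply Hno; exists X; split; [exact HXX|].
    intros chi Xchi HQ. apply Hnone; eauto.
  - intros [X [HXX Hall]] Hae. destruct (Hae X HXX) as [chi [Xchi HQ]].
    exact (Hall chi Xchi HQ).
Qed.

Lemma not_EA_sat (HX : hset AP) (Q : asg AP -> Prop) :
  ~ EA_sat HX Q <-> AE_sat HX (fun chi => ~ Q chi).
Proof.
  unfold AE_sat, EA_sat. split.
  - intros Hnot X HXX. apply NNPP; intros Hnone. apply Hnot.
    exists X; split; [exact HXX|]. intros chi Xchi.
    apply NNPP; intros HQ. apply Hnone; eauto.
  - intros Hae [X [HXX Hall]]. destruct (Hae X HXX) as [chi [Xchi HQ]]. auto.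
Qed.

(* A set of the dual family is the image of a choice function, so "some image
   lies inside Q" means "Q can be chosen from every set". *)
Lemma EA_sat_dual (HX : hset AP) (Q : asg AP -> Prop) :
  EA_sat (dual HX) Q <-> AE_sat HX Q.
Proof.
  unfold EA_sat, AE_sat. split.
  - intros [Y [[c [Hc ->]] Hall]] X HXX.
    exists (c X); split; [exact (Hc X HXX)|]. apply Hall; exists X; auto.
  - intros Hae.
    set (c := fun X : aset AP => epsilon asg_inh (fun chi => X chi /\ Q chi)).
    assert (Hc : forall X, HX X -> X (c X) /\ Q (c X))
      by (intros X HXX; apply epsilon_spec, Hae, HXX).
    exists (img HX c); split.
    + exists c; split; [intros X HXX; apply Hc, HXX | reflexivity].
    + intros chi [X [HXX <-]]. apply Hc, HXX.
Qed.

(* Dually, Q meets every image iff some set lies inside Q: otherwise choosing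
   a counterexample from each set yields an image avoiding Q. *)
Lemma AE_sat_dual (HX : hset AP) (Q : asg AP -> Prop) :
  AE_sat (dual HX) Q <-> EA_sat HX Q.
Proof.
  split.
  - intros Hae. apply NNPP; intros Hnot.
    apply not_EA_sat in Hnot. apply EA_sat_dual in Hnot.
    destruct Hnot as [Y [HY Hall]]. destruct (Hae Y HY) as [chi [Ychi HQ]].
    exact (Hall chi Ychi HQ).
  - intros [X [HXX Hall]] Y [c [Hc ->]].
    exists (c X); split; [exists X; auto | apply Hall, Hc, HXX].
Qed.

(* The conjunction clause: for every partition one part is nonempty and has a
   set inside its predicate.  Splitting HX by whether a set lies inside Q1
   forces a set inside both Q1 and Q2. *)
Lemma EA_sat_partition (HX : hset AP) (Q1 Q2 : asg AP -> Prop) :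
  (forall HX1 HX2, is_par HX HX1 HX2 ->
     (nonempty HX1 /\ EA_sat HX1 Q1) \/ (nonempty HX2 /\ EA_sat HX2 Q2)) <->
  EA_sat HX (fun chi => Q1 chi /\ Q2 chi).
Proof.
  split.
  - intros Hpar.
    set (Inside1 := fun Y : aset AP => forall chi, Y chi -> Q1 chi).
    assert (Hsplit : is_par HX (fun Y => HX Y /\ ~ Inside1 Y)
                               (fun Y => HX Y /\ Inside1 Y)).
    { split; [intros Y [[_ HnY] [_ HY]]; auto|].
      intros Y; split; [|tauto]. intros HXY.
      destruct (classic (Inside1 Y)); tauto. }
    destruct (Hpar _ _ Hsplit) as [[_ [X [[_ Hout] Hin]]] | [_ [X [[HXX H1] H2]]]].
    + contradiction.
    + exists X; split; [exact HXX|]. intros chi Xchi; split; auto.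
  - intros [X [HXX Hall]] HX1 HX2 [_ Hcover].
    destruct (proj1 (Hcover X) HXX) as [HX1X | HX2X]; [left | right];
      (split; [exists X; assumption|]); exists X; split; auto;
      intros chi Xchi; apply Hall, Xchi.
Qed.

(* The disjunction clause: some partition has every set of each nonempty part
   meeting its predicate.  Send to the first part the sets meeting Q1. *)
Lemma AE_sat_partition (HX : hset AP) (Q1 Q2 : asg AP -> Prop) :
  (exists HX1 HX2, is_par HX HX1 HX2 /\
     (nonempty HX1 -> AE_sat HX1 Q1) /\ (nonempty HX2 -> AE_sat HX2 Q2)) <->
  AE_sat HX (fun chi => Q1 chi \/ Q2 chi).
Proof.
  split.
  - intros [HX1 [HX2 [[_ Hcover] [H1 H2]]]] X HXX.
    destruct (proj1 (Hcover X) HXX) as [HX1X | HX2X].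
    + destruct (H1 (ex_intro _ X HX1X) X HX1X) as [chi [Xchi HQ]]. eauto.
    + destruct (H2 (ex_intro _ X HX2X) X HX2X) as [chi [Xchi HQ]]. eauto.
  - intros Hae.
    set (Meets1 := fun Y : aset AP => exists chi, Y chi /\ Q1 chi).
    exists (fun Y => HX Y /\ Meets1 Y), (fun Y => HX Y /\ ~ Meets1 Y).
    split; [split|split].
    + intros Y [[_ HY] [_ HnY]]; auto.
    + intros Y; split; [|tauto]. intros HXY.
      destruct (classic (Meets1 Y)); tauto.
    + intros _ X [_ HX1]; exact HX1.
    + intros _ X [HXX Hnot]. destruct (Hae X HXX) as [chi [Xchi [HQ1 | HQ2]]].
      * exfalso; apply Hnot; exists chi; auto.
      * eauto.
Qed.

(* Extending every set by a functor for p realises the existential quantifier: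
   the functor picks, for each assignment, a witnessing valuation of p. *)
Lemma EA_sat_ext (HX : hset AP) (p : AP) (Q : asg AP -> Prop) :
  EA_sat (ext_hset HX p) Q <-> EA_sat HX (fun chi => exists f, Q (upd chi p f)).
Proof.
  split.
  - intros [Y [[X [F [HXX ->]]] Hall]]. exists X; split; [exact HXX|].
    intros chi Xchi. exists (F chi). apply Hall; exists chi; auto.
  - intros [X [HXX Hall]].
    set (F := fun chi : asg AP =>
                epsilon (inhabits (fun _ : nat => false)) (fun f => Q (upd chi p f))).
    exists (ext_set X F p); split; [exists X, F; auto|].
    intros chi' [chi [Xchi ->]]. unfold ext_asg, F. apply epsilon_spec, Hall, Xchi.
Qed.

(* Dually, every extended set meets Q iff some set of HX meets the universal
   quantifier; otherwise a functor choosing counterexamples refutes it. *)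
Lemma AE_sat_ext (HX : hset AP) (p : AP) (Q : asg AP -> Prop) :
  AE_sat (ext_hset HX p) Q <-> AE_sat HX (fun chi => forall f, Q (upd chi p f)).
Proof.
  split.
  - intros Hae. apply NNPP; intros Hnot.
    apply not_AE_sat in Hnot.
    assert (Hrefute : EA_sat HX (fun chi => exists f, ~ Q (upd chi p f))).
    { destruct Hnot as [X [HXX Hall]]. exists X; split; [exact HXX|].
      intros chi Xchi. apply not_all_ex_not, Hall, Xchi. }
    apply (EA_sat_ext HX p (fun chi => ~ Q chi)) in Hrefute. destruct Hrefute as [Y [HY Hall]].
    destruct (Hae Y HY) as [chi [Ychi HQ]]. exact (Hall chi Ychi HQ).
  - intros Hae Y [X [F [HXX ->]]]. destruct (Hae X HXX) as [chi [Xchi HQ]].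
    exists (ext_asg chi F p); split; [exists chi; auto | apply HQ].
Qed.

End Quantifiers.

Lemma hodges_tarski (AP : Type) (phi : qptl AP) :
  forall (a : flag) (HX : hset AP),
    hodges phi a HX <-> flag_sat a HX (fun chi => tarski chi phi).
Proof.
  induction phi as [psi | phi IH | phi1 IH1 phi2 IH2 | phi1 IH1 phi2 IH2
                    | p phi IH | p phi IH];
    intros a HX; destruct a; cbn -[dual ext_hset].
  - reflexivity.
  - reflexivity.
  - rewrite IH; apply not_AE_sat.
  - rewrite IH; apply not_EA_sat.
  - setoid_rewrite IH1; setoid_rewrite IH2. apply EA_sat_partition.
  - setoid_rewrite IH1; setoid_rewrite IH2.
    cbn [flag_sat]; rewrite EA_sat_partition. apply EA_sat_dual.
  - setoid_rewrite IH1; setoid_rewrite IH2.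
    cbn [flag_sat]; rewrite AE_sat_partition. apply AE_sat_dual.
  - setoid_rewrite IH1; setoid_rewrite IH2. apply AE_sat_partition.
  - rewrite IH; apply EA_sat_ext.
  - rewrite IH; cbn [flag_sat]; rewrite EA_sat_ext. apply EA_sat_dual.
  - rewrite IH; cbn [flag_sat]; rewrite AE_sat_ext. apply AE_sat_dual.
  - rewrite IH; apply AE_sat_ext.
Qed.

Theorem mainTheorem5 (AP : Type) (phi : qptl AP) (HX : hset AP) :
  in_HAsg_sup (free phi) HX ->
  (hodges phi EA HX <-> exists X, HX X /\ forall chi, X chi -> tarski chi phi) /\
  (hodges phi AE HX <-> forall X, HX X -> exists chi, X chi /\ tarski chi phi).
Proof.
  intros _. split; apply (hodges_tarski phi).
Qed.
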